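(* Let $U,V\subseteq M$ be open, let $\Psi:U\to V$ be a diffeomorphism with $\Psi^*t=t$, and let $g$ be a slice-compatible Lorentzian metric on $V$ with shift $X$. For a tensor field $T$ on $V$ define $B=\mathcal S(T;X)$ and $\hat B=\mathcal S(\Psi^*T;\hat X)$, where $\hat X$ is the shift of the slice-compatible Lorentzian metric $\Psi^*g$. Then $\hat B=j_*\Psi^*B$. If additionally $\Psi$ is the identity on $\Sigma_{t_0}\cap U$ for some $t_0$, then on $\Sigma_{t_0}\cap U$ we have $\hat B=B$ and $\mathcal L_S\hat B=\mathcal L_SB$ for all spatial vector fields $S$.
   Context: $M=\Sigma\times I$, where $\Sigma\subseteq\mathbb R^n$ is open with coordinates $x^1,\dots,x^n$ and $I\subseteq\mathbb R$ is an open interval with coordinate $t$; $\Sigma_t=\Sigma\times\{t\}$; all fields smooth. A tensor is spatial if it vanishes whenever one of its arguments is $dt$ or $\partial_t$. The projection $j_*$: $j_*dt=0$, $j_*dx^i=dx^i$, $j_*\partial_t=0$, $j_*\partial_{x^i}=\partial_{x^i}$, $j_*T(\cdot,\dots,\cdot)=T(j_*\cdot,\dots,j_*\cdot)$. $\Psi^*$ acts on vectors by $\Psi^*Y=(\Psi^{-1})_*Y$. A Lorentzian metric $g$ is slice compatible if its restriction to each $\Sigma_t$ is Riemannian; its unit normal $\nu$ satisfies $\nu(dt)>0$, $g(\nu,\nu)=-1$, $j_*g(\nu,\cdot)=0$; writing $\partial_t=N\nu+X$ with $X$ spatial defines the shift $X$ (and lapse $N$). Decomposition of tensors: for a spatial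 vector field $X$, let $\mathcal P_X(a\partial_t+W)=aX+W$ ($W$ spatial) and $\mathcal P_X^*$ its adjoint on 1-forms, $(\mathcal P_X^*\omega)(Z)=\omega(\mathcal P_XZ)$. For a tensor $T$ of rank $k$, one obtains $2^k$ spatial tensors by choosing, for each slot taking a vector, either to insert $\partial_t-X$ or to precompose with $j_*$, and for each slot taking a covector, either to insert $dt$ or to precompose with $\mathcal P_X^*$ (e.g. $b\,dt+\eta\mapsto(b-\eta(X),\eta)$ and $a\partial_t+W\mapsto(a,W+aX)$). In a fixed order these form the tuple $\mathcal S(T;X)$. The operations $j_*$, $\Psi^*$ and $\mathcal L_S$ act on such tuples componentwise. *)

(* Everything is done in the global
   coordinate chart (x^1,...,x^n,t) of M = Sigma x I, an open subset of
   R^(n+1).  Points are row vectors 'rV[R]_n.+1; the coordinate t is the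
   last one (index ord_max). *)
From HB Require Import structures.
From mathcomp Require Import all_boot all_order all_algebra.
From mathcomp Require Import all_classical all_reals all_analysis.
Set Implicit Arguments. Unset Strict Implicit. Unset Printing Implicit Defensive.
Import Order.TTheory GRing.Theory Num.Theory.
Import numFieldNormedType.Exports.
Local Open Scope classical_set_scope.
Local Open Scope ring_scope.

Section Defs.
Variable R : realType.
Variable n : nat.
Local Notation pt := 'rV[R]_n.+1.

Definition tidx : 'I_n.+1 := ord_max.
Definition tcoord (p : pt) : R := p ord0 tidx.
Definition spat (p : pt) : 'rV[R]_n := \row_(i < n) p ord0 (widen_ord (leqnSn n) i).
Definition Mset (Sigma : set 'rV[R]_n) (a b : \bar R) : set pt :=
  [set p | Sigma (spat p) /\ (a < (tcoord p)%:E < b)%E].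

Definition ebasis (i : 'I_n.+1) : pt := delta_mx 0 i.
Definition pd (i : 'I_n.+1) (f : pt -> R) (x : pt) : R := 'D_(ebasis i) f x.

Fixpoint Ck (k : nat) (U : set pt) (f : pt -> R) : Prop :=
  match k with
  | 0 => forall x, U x -> {for x, continuous f}
  | k.+1 => (forall x, U x -> differentiable f x) /\ forall i, Ck k U (pd i f)
  end.
Definition smooth_on (U : set pt) (f : pt -> R) : Prop := forall k, Ck k U f.

(* A tensor field with slot set S (a finite type), given by its components
   T p f = T_p(e_{f i})_i, where e_a is d/dx^a in a vector slot and dx^a in a
   covector slot.  The slot kinds are given by kind : S -> bool
   (true = slot taking a vector, false = slot taking a covector). *)
Definition tfield (S : finType) := pt -> {ffun S -> 'I_n.+1} -> R.

Definition tsmooth (S : finType) (U : set pt) (T : tfield S) : Prop :=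
  forall f, smooth_on U (fun p => T p f).

Definition vsmooth (U : set pt) (Y : pt -> pt) : Prop :=
  forall a, smooth_on U (fun p => Y p ord0 a).

Definition jstar (S : finType) (T : tfield S) : tfield S :=
  fun p f => T p f * \prod_(i : S) (f i != tidx)%:R.

Definition jac (Psi : pt -> pt) (p : pt) : 'M[R]_n.+1 :=
  \matrix_(b, a) pd a (fun q => Psi q ord0 b) p.

(* pullback: (Psi^* T)_p(Y.., w..) = T_{Psi p}(Psi_* Y.., (Psi^-1)^* w..) *)
Definition pullback (S : finType) (kind : S -> bool) (Psi : pt -> pt)
  (T : tfield S) : tfield S :=
  fun p f => \sum_(g : {ffun S -> 'I_n.+1}) T (Psi p) g *
     \prod_(i : S) (if kind i then jac Psi p (g i) (f i)
                    else invmx (jac Psi p) (f i) (g i)).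

Definition fupd (S : finType) (f : {ffun S -> 'I_n.+1}) (i : S) (c : 'I_n.+1)
  : {ffun S -> 'I_n.+1} := [ffun j => if j == i then c else f j].

Definition lie (S : finType) (kind : S -> bool) (Y : pt -> pt) (T : tfield S)
  : tfield S :=
  fun p f => \sum_(c < n.+1) Y p ord0 c * pd c (fun q => T q f) p
   + \sum_(i : S) \sum_(c < n.+1)
       (if kind i then pd (f i) (fun q => Y q ord0 c) p
        else - pd c (fun q => Y q ord0 (f i)) p) * T p (fupd f i c).

(* The components are indexed by c : {ffun S -> bool}
   (c i = true: insert d_t - X (vector slot) resp. dt (covector slot) in slot
   i; c i = false: precompose slot i with j_* resp. P_X^* ).  The component
   indexed by c is a tensor field whose slots are the non-inserted ones. *)
Definition subkind (S : finType) (kind : S -> bool) (c : {ffun S -> bool})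
  : {i : S | ~~ c i} -> bool := fun j => kind (val j).

Definition dweight (S : finType) (kind : S -> bool) (c : {ffun S -> bool})
  (X : pt -> pt) (p : pt) (f : {ffun {i : S | ~~ c i} -> 'I_n.+1})
  (i : S) (b : 'I_n.+1) : R :=
  match (insub i : option {i : S | ~~ c i}) with
  | Some j => let a := f j in
      if kind i then (a != tidx)%:R * (b == a)%:R            (* j_* d_a *)
      else (a != tidx)%:R * ((b == a)%:R + (b == tidx)%:R * X p ord0 a)
                                                           (* P_X^* dx^a *)
  | None => if kind i then (b == tidx)%:R - X p ord0 b      (* d_t - X *)
            else (b == tidx)%:R                             (* dt *)
  end.

Definition decomp (S : finType) (kind : S -> bool) (T : tfield S)
  (X : pt -> pt) : forall c : {ffun S -> bool}, tfield {i : S | ~~ c i} :=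
  fun c p f => \sum_(g : {ffun S -> 'I_n.+1})
                 T p g * \prod_(i : S) @dweight S kind c X p f i (g i).

Definition vkind2 : 'I_2 -> bool := fun _ => true.
Definition gmat (g : tfield 'I_2) (p : pt) : 'M[R]_n.+1 :=
  \matrix_(a, b) g p [ffun i : 'I_2 => if i == ord0 then a else b].
Definition gform (g : tfield 'I_2) (p : pt) (u v : pt) : R :=
  (u *m gmat g p *m v^T) ord0 ord0.

Definition lorentzian_at (g : tfield 'I_2) (p : pt) : Prop :=
  (gmat g p)^T = gmat g p /\
  exists P : 'M[R]_n.+1, P \in unitmx /\
    P^T *m gmat g p *m P = diag_mx (\row_i (if i == tidx then -1 else 1)).

Definition slice_compatible (V : set pt) (g : tfield 'I_2) : Prop :=
  tsmooth V g /\
  forall p, V p -> lorentzian_at g p /\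
    (forall v : pt, v ord0 tidx = 0 -> v != 0 -> 0 < gform g p v v).

Definition is_shift (g : tfield 'I_2) (p : pt) (x : pt) : Prop :=
  x ord0 tidx = 0 /\
  exists (N : R) (nu : pt),
    0 < nu ord0 tidx /\ gform g p nu nu = -1 /\
    (forall w : pt, w ord0 tidx = 0 -> gform g p nu w = 0) /\
    ebasis tidx = N *: nu + x.

Definition diffeo (U V : set pt) (Psi : pt -> pt) : Prop :=
  (forall p, U p -> V (Psi p)) /\ vsmooth U Psi /\
  exists Phi : pt -> pt, (forall q, V q -> U (Phi q)) /\ vsmooth V Phi /\
    (forall p, U p -> Phi (Psi p) = p) /\ (forall q, V q -> Psi (Phi q) = q).

End Defs.
Arguments decomp {R n S} kind T X c _ _.
Arguments subkind {S} kind c _.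
Arguments dweight {R n S} kind c X p f i b.

(* Since Psi preserves t, its Jacobian J satisfies dt o J = dt: Psi_* maps spatial
   vectors to spatial vectors and Psi^* fixes dt.  It therefore maps the future unit
   normal of Psi^* g to that of g, so the lapses agree and the shifts are related by
   Psi_* Xhat = X + Psi_* d_t - d_t.  With this, the slots of S(Psi^* T; Xhat) transform
   one at a time: Psi_* sends d_t - Xhat to d_t - X and j_* d_a to a spatial vector,
   while (Psi^-1)^* fixes dt and intertwines P_Xhat^* with P_X^*; this is
   B^ = j_* Psi^* B.  On the slice t = t0, Psi = id makes the spatial
   columns of J those of the identity, so the spatial tensors B are fixed by
   j_* Psi^*; as B^ and B then agree on the whole slice, so do their derivatives in
   spatial directions, hence their Lie derivatives along spatial fields. *)

From mathcomp Require Import all_boot all_order all_algebra.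
From mathcomp Require Import all_classical all_reals all_analysis.
From mathcomp Require Import ring.
Import Order.TTheory GRing.Theory Num.Theory.
Import numFieldNormedType.Exports.
Local Open Scope classical_set_scope.
Local Open Scope ring_scope.
Set Implicit Arguments. Unset Strict Implicit. Unset Printing Implicit Defensive.

Section BigInsub.
Variables (R : comPzSemiRingType) (S : finType) (P : pred S).

Lemma prod_insub (G : {i | P i} -> R) (C : S -> R) :
  \prod_i (if insub i is Some j then G j else C i)
  = \prod_(j : {i | P i}) G j * \prod_(i | ~~ P i) C i.
Proof.
rewrite (bigID P) /=; congr (_ * _); last first.
  by apply: eq_bigr => i /negbTE Pi; rewrite insubF.
rewrite (reindex_omap (val : {i | P i} -> S) insub) => [|i Pi]; last by rewrite insubT.
by apply: eq_big => [j|j _]; rewrite valK ?(valP j) ?eqxx.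
Qed.

Lemma prod_insub1 (G : {i | P i} -> R) :
  \prod_(j : {i | P i}) G j = \prod_i (if insub i is Some j then G j else 1).
Proof. by rewrite prod_insub big1_eq mulr1. Qed.

Lemma sum_ffun_prod_insub (I : finType) (F : {i | P i} -> I -> R) (C : S -> R) :
  \sum_(h : {ffun {i | P i} -> I})
     \prod_i (if insub i is Some j then F j (h j) else C i)
  = \prod_i (if insub i is Some j then \sum_a F j a else C i).
Proof.
rewrite (eq_bigr (fun h : {ffun {i | P i} -> I} =>
  (\prod_j F j (h j)) * \prod_(i | ~~ P i) C i)) => [|h _]; last first.
  by rewrite (prod_insub (fun j => F j (h j))).
by rewrite -big_distrl /= prod_insub bigA_distr_bigA.
Qed.

End BigInsub.

Section Tensor.
Variables (R : realType) (n : nat).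
Local Notation t := (tidx n).
Local Notation pt := 'rV[R]_n.+1.
Local Notation et := (ebasis R t).

Definition transfer (J : 'M[R]_n.+1) (v : bool) (b a : 'I_n.+1) : R :=
  if v then J b a else invmx J a b.

Definition spatial_weight (v : bool) (x : pt) (a b : 'I_n.+1) : R :=
  if v then (a != t)%:R * (b == a)%:R
  else (a != t)%:R * ((b == a)%:R + (b == t)%:R * x ord0 a).

Definition normal_weight (v : bool) (x : pt) (b : 'I_n.+1) : R :=
  if v then (b == t)%:R - x ord0 b else (b == t)%:R.

Lemma dweightE (S : finType) (kind : S -> bool) c (X : pt -> pt) p f i b :
  dweight kind c X p f i b =
  if insub i is Some j then spatial_weight (kind i) (X p) (f j) b
  else normal_weight (kind i) (X p) b.
Proof. by []. Qed.

Lemma sum_delta_l (F : 'I_n.+1 -> R) a : \sum_b (b == a)%:R * F b = F a.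
Proof.
rewrite (bigD1 a) //= eqxx mul1r big1 ?addr0 // => b /negbTE ->.
by rewrite mul0r.
Qed.

Lemma sum_delta_r (F : 'I_n.+1 -> R) a : \sum_b (a == b)%:R * F b = F a.
Proof. by under eq_bigr do rewrite eq_sym; apply: sum_delta_l. Qed.

Lemma ebasisE a b : (ebasis R a : pt) ord0 b = (b == a)%:R.
Proof. by rewrite mxE eqxx. Qed.

Lemma mul_trmxE (J : 'M[R]_n.+1) (u : pt) b :
  (u *m J^T) ord0 b = \sum_a J b a * u ord0 a.
Proof. by rewrite mxE; apply: eq_bigr => a _; rewrite mxE mulrC. Qed.

Section Transfer.
Variables (J : 'M[R]_n.+1) (x xh : pt).
Hypothesis J_unit : J \in unitmx.
Hypothesis J_time : forall a, J t a = (a == t)%:R.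
Hypothesis x_spatial : x ord0 t = 0.
Hypothesis shift_push : xh *m J^T = x + et *m J^T - et.
Local Notation Ji := (invmx J).

Lemma sum_invmx_mul a a' : \sum_b Ji a b * J b a' = (a == a')%:R.
Proof.
by have := congr1 (fun M : 'M[R]_n.+1 => M a a') (mulVmx J_unit); rewrite !mxE.
Qed.

Lemma sum_mul_invmx a a' : \sum_b J a b * Ji b a' = (a == a')%:R.
Proof.
by have := congr1 (fun M : 'M[R]_n.+1 => M a a') (mulmxV J_unit); rewrite !mxE.
Qed.

Lemma invmx_time e : Ji t e = (t == e)%:R.
Proof.
by rewrite -sum_mul_invmx; under eq_bigr do rewrite J_time; rewrite sum_delta_l.
Qed.

Lemma shift_pull : xh = x *m Ji^T + et - et *m Ji^T.
Proof.
have JJi : J^T *m Ji^T = 1%:M by rewrite -trmx_mul mulVmx // trmx1.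
by rewrite -[xh]mulmx1 -JJi mulmxA shift_push !mulmxBl mulmxDl -mulmxA JJi mulmx1.
Qed.

Lemma shift_pullE a : xh ord0 a = \sum_b Ji a b * x ord0 b + (a == t)%:R - Ji a t.
Proof.
rewrite {1}shift_pull !mxE eqxx /=; congr (_ + _ - _).
  by apply: eq_bigr => b _; rewrite mxE mulrC.
rewrite (bigD1 t) //= big1 ?addr0 => [|b /negbTE bt]; rewrite !mxE ?bt ?eqxx /=.
  by rewrite mul1r.
by rewrite mul0r.
Qed.

Lemma transfer_normal v e :
  \sum_b transfer J v e b * normal_weight v xh b = normal_weight v x e.
Proof.
case: v => /=; last first.
  by under eq_bigr do rewrite mulrC; rewrite sum_delta_l invmx_time eq_sym.
have push_normal : (et - xh) *m J^T = et - x.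
  by rewrite mulmxBl shift_push; apply/rowP => b; rewrite !mxE; ring.
transitivity ((et - x) ord0 e); last by rewrite !mxE eqxx.
rewrite -push_normal mul_trmxE; apply: eq_bigr => b _.
by rewrite !mxE eqxx.
Qed.

Lemma transfer_spatial v a e :
  \sum_b transfer J v e b * spatial_weight v xh a b
  = (a != t)%:R * \sum_a' spatial_weight v x a' e * transfer J v a' a.
Proof.
have [->|a_sp] := eqVneq a t.
  by rewrite mul0r big1 // => b _; case: v; rewrite /spatial_weight eqxx !mul0r mulr0.
rewrite /transfer /spatial_weight a_sp mul1r; case: v.
  under eq_bigr do rewrite mul1r mulrC; rewrite sum_delta_l.
  rewrite (eq_bigr (fun b => (e == b)%:R * ((b != t)%:R * J b a))) => [|b _]; last by ring.
  rewrite sum_delta_r.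
  by have [->|] := eqVneq e t; rewrite ?J_time ?(negbTE a_sp) ?eqxx /= ?mul0r ?mul1r.
(* Covector slot: for [e != t] both sides are [Ji a e]; for [e = t] this is [shift_pullE]. *)
under eq_bigr do rewrite mul1r mulrDr mulrA.
rewrite big_split /=; under eq_bigr do rewrite mulrC; rewrite sum_delta_l.
rewrite (eq_bigr (fun b => xh ord0 a * ((b == t)%:R * Ji b e))); last by move=> b _; ring.
rewrite -big_distrr /= sum_delta_l invmx_time.
under eq_bigr do rewrite mulrDr mulrDl.
rewrite big_split /=.
rewrite (eq_bigr (fun b => (e == b)%:R * ((b != t)%:R * Ji a b))) => [|b _]; last by ring.
rewrite sum_delta_r.
rewrite (eq_bigr (fun b => (e == t)%:R * (Ji a b * x ord0 b))); last first.
  by move=> b _; have [->|_] := eqVneq b t; rewrite ?x_spatial /=; ring.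
rewrite -big_distrr /=.
have [->|_] := eqVneq e t; last by rewrite /=; ring.
by rewrite shift_pullE (negbTE a_sp) /=; ring.
Qed.

Lemma prod_transfer_dweight (S : finType) (kind : S -> bool) (c : {ffun S -> bool})
    (Xh X : pt -> pt) p q f (g : {ffun S -> 'I_n.+1}) :
  Xh p = xh -> X q = x ->
  \prod_i \sum_b transfer J (kind i) (g i) b * dweight kind c Xh p f i b
  = \prod_j (f j != t)%:R * \sum_h (\prod_i dweight kind c X q h i (g i)) *
       \prod_j transfer J (subkind kind c j) (h j) (f j).
Proof.
move=> Xhp Xq.
pose W (j : {i | ~~ c i}) a :=
  spatial_weight (kind (val j)) x a (g (val j)) * transfer J (kind (val j)) a (f j).
rewrite (eq_bigr (fun h : {ffun {i | ~~ c i} -> 'I_n.+1} =>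
  \prod_i if insub i is Some j then W j (h j) else normal_weight (kind i) x (g i)));
  last first.
  move=> h _; rewrite prod_insub1 -big_split /=; apply: eq_bigr => i _.
  by rewrite dweightE Xq; case: insubP => [j _ <-|_]; rewrite ?mulr1.
rewrite sum_ffun_prod_insub prod_insub1 -big_split /=; apply: eq_bigr => i _.
under eq_bigr do rewrite dweightE Xhp.
case: insubP => [j _ <-|_]; first exact: transfer_spatial.
by rewrite mul1r transfer_normal.
Qed.

End Transfer.

Lemma decomp_pullback_at (S : finType) (kind : S -> bool) (T : tfield R n S)
    (Psi X Xh : pt -> pt) p c f :
  jac Psi p \in unitmx -> (forall a, jac Psi p t a = (a == t)%:R) ->
  X (Psi p) ord0 t = 0 ->
  Xh p *m (jac Psi p)^T = X (Psi p) + et *m (jac Psi p)^T - et ->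
  decomp kind (pullback kind Psi T) Xh c p f
  = jstar (pullback (subkind kind c) Psi (decomp kind T X c)) p f.
Proof.
move=> J_unit J_time x_spatial shift_push; rewrite /decomp /jstar /pullback.
under [LHS]eq_bigr => g' _ do rewrite big_distrl /=.
rewrite exchange_big /= big_distrl /=.
under [RHS]eq_bigr do rewrite big_distrl /= big_distrl /=.
rewrite [RHS]exchange_big /=; apply: eq_bigr => g _.
under eq_bigr do rewrite -mulrA -big_split /=.
rewrite -big_distrr /= -(bigA_distr_bigA (fun i b =>
  transfer (jac Psi p) (kind i) (g i) b * dweight kind c Xh p f i b)) /=.
rewrite (@prod_transfer_dweight _ _ _ J_unit J_time x_spatial shift_push
  _ kind c Xh X p (Psi p)) //.
by rewrite big_distrr /= big_distrr /=; apply: eq_bigr => h _; ring.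
Qed.

End Tensor.

Lemma derive_eq_on_line (R : numFieldType) (V W : normedModType R) (f g : V -> W)
    (a v : V) :
  (\forall h \near (0 : R), f (a + h *: v) = g (a + h *: v)) -> 'D_v f a = 'D_v g a.
Proof.
move=> fg.
have fga : f a = g a by have := nbhs_singleton fg; rewrite scale0r addr0.
rewrite /derive; congr lim; rewrite eqEsubset; split; apply: near_eq_cvg;
  apply: cvg_within; move: fg; apply: filterS => h /= E;
  by rewrite [h *: v + a]addrC E fga.
Qed.

Lemma near0_on_line (R : realType) (V : normedModType R) (A : set V) (p v : V) :
  open A -> A p -> \forall h \near (0 : R), A (p + h *: v).
Proof.
move=> oA Ap.
have : (fun h : R => p + h *: v) @ (0 : R) --> p + 0 *: v.
  by apply: cvgD; [exact: cvg_cst | exact: cvgZr_tmp].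
by rewrite scale0r addr0; apply; apply: open_nbhs_nbhs.
Qed.

Section Calculus.
Variables (R : realType) (n : nat).
Local Notation t := (tidx n).
Local Notation pt := 'rV[R]_n.+1.

Lemma derive_coord (b : 'I_n.+1) (v x : pt) : 'D_v (fun q : pt => q ord0 b) x = v ord0 b.
Proof.
rewrite /derive; apply: lim_near_cst; first exact: norm_hausdorff.
near=> h.
have h0 : h != 0 by near: h; exact: nbhs_dnbhs_neq.
rewrite /= !mxE addrK /GRing.scale /= mulKf //.
Unshelve. all: by end_near.
Qed.

Lemma differentiable_row_coord (F : pt -> pt) (x : pt) :
  (forall b, differentiable (fun q => F q ord0 b) x) -> differentiable F x.
Proof.
move=> dF.
have -> : F = \sum_(b < n.+1) (fun q => F q ord0 b *: ebasis R b).
  by apply/funext => q; rewrite fct_sumE [LHS]row_sum_delta.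
by apply: differentiable_sum => b; apply: differentiableZl.
Qed.

Lemma vsmooth_differentiable (F : pt -> pt) (A : set pt) :
  vsmooth A F -> forall x, A x -> differentiable F x.
Proof. by move=> sm x Ax; apply: differentiable_row_coord => b; exact: (sm b 1%N).1. Qed.

Lemma diff_coord (F : pt -> pt) x v c : differentiable F x ->
  'd (fun q => F q ord0 c) x v = ('d F x v) ord0 c.
Proof.
move=> dF.
rewrite (_ : (fun q => F q ord0 c) = (fun N : pt => N ord0 c) \o F) //.
rewrite diff_comp //; last exact: differentiable_coord.
by rewrite /= -deriveE ?derive_coord //; exact: differentiable_coord.
Qed.

Lemma jacE (F : pt -> pt) x a c : differentiable F x ->
  jac F x c a = ('d F x (ebasis R a)) ord0 c.
Proof.
move=> dF; rewrite /jac mxE /pd deriveE ?diff_coord //.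
rewrite (_ : (fun q => F q ord0 c) = (fun N : pt => N ord0 c) \o F) //.
exact: differentiable_comp (differentiable_coord _ _ _).
Qed.

Section InverseJacobian.
Variables (U V : set pt) (Psi Phi : pt -> pt).
Hypotheses (oU : open U) (PsiUV : forall p, U p -> V (Psi p))
  (Psi_smooth : vsmooth U Psi) (Phi_smooth : vsmooth V Phi)
  (PhiK : forall p, U p -> Phi (Psi p) = p).

Lemma jac_inverse p : U p -> jac Phi (Psi p) *m jac Psi p = 1%:M.
Proof.
move=> Up.
have dPsi := vsmooth_differentiable Psi_smooth Up.
have dPhi := vsmooth_differentiable Phi_smooth (PsiUV Up).
apply/matrixP => b a; rewrite !mxE.
have jac_id : jac (Phi \o Psi) p b a = (b == a)%:R.
  rewrite /jac mxE /pd (@near_eq_derive _ _ _ _ (fun N : pt => N ord0 b)).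
    by rewrite derive_coord mxE eqxx.
  by apply: filterS (open_nbhs_nbhs (conj oU Up)) => q Uq /=; rewrite PhiK.
rewrite (jacE _ _ (differentiable_comp dPsi dPhi)) diff_comp //= in jac_id.
rewrite [X in 'd Phi _ X]row_sum_delta linear_sum /= in jac_id.
rewrite -jac_id summxE; apply: eq_bigr => c _.
rewrite linearZ /= [in RHS]mxE (jacE _ _ dPsi) mulrC; congr (_ * _).
by rewrite -(jacE _ _ dPhi) /jac mxE.
Qed.

Lemma jac_unit p : U p -> jac Psi p \in unitmx.
Proof. by move=> Up; have [] := mulmx1_unit (jac_inverse Up). Qed.

End InverseJacobian.

Lemma jac_time_row (U : set pt) (Psi : pt -> pt) p : open U ->
  (forall q, U q -> tcoord (Psi q) = tcoord q) -> U p ->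
  forall a, jac Psi p t a = (a == t)%:R.
Proof.
move=> oU Psi_t Up a; rewrite /jac mxE /pd.
rewrite (@near_eq_derive _ _ _ _ (fun N : pt => N ord0 t)).
  by rewrite derive_coord mxE eqxx eq_sym.
exact: filterS (open_nbhs_nbhs (conj oU Up)).
Qed.

End Calculus.

Section ShiftPushforward.
Variables (R : realType) (n : nat).
Local Notation t := (tidx n).
Local Notation pt := 'rV[R]_n.+1.

Definition mxform (G : 'M[R]_n.+1) (u v : pt) : R := (u *m G *m v^T) ord0 ord0.

Lemma mxformBl G u1 u2 k v :
  mxform G (u1 - k *: u2) v = mxform G u1 v - k * mxform G u2 v.
Proof. by rewrite /mxform !mulmxBl -!scalemxAl !mxE. Qed.

Lemma mxformZ G k u v : mxform G (k *: u) (k *: v) = k * k * mxform G u v.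
Proof. by rewrite /mxform linearZ /= -scalemxAr -!scalemxAl !mxE mulrA. Qed.

Lemma mxform_mul G (J : 'M[R]_n.+1) u v :
  mxform (J^T *m G *m J) u v = mxform G (u *m J^T) (v *m J^T).
Proof. by rewrite /mxform trmx_mul trmxK !mulmxA. Qed.

Definition ffun_of_pair (ab : 'I_n.+1 * 'I_n.+1) : {ffun 'I_2 -> 'I_n.+1} :=
  [ffun i : 'I_2 => if i == ord0 then ab.1 else ab.2].

Lemma ffun_of_pair_bij : bijective ffun_of_pair.
Proof.
exists (fun h : {ffun 'I_2 -> 'I_n.+1} => (h ord0, h ord_max)).
  by case=> a b; rewrite !ffunE.
move=> h; apply/ffunP => i; rewrite !ffunE.
by case: i => -[|[|//]] i_lt /=; congr (h _); apply: val_inj.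
Qed.

Lemma gmat_pullback (Psi : pt -> pt) (g : tfield R n 'I_2) p :
  gmat (pullback vkind2 Psi g) p = (jac Psi p)^T *m gmat g (Psi p) *m jac Psi p.
Proof.
apply/matrixP => a b; rewrite /gmat /pullback mxE.
rewrite (reindex ffun_of_pair) /=; last exact/onW_bij/ffun_of_pair_bij.
rewrite !mxE; under [RHS]eq_bigr do rewrite !mxE big_distrl /=.
rewrite [RHS]exchange_big /= [RHS]pair_bigA /=.
apply: eq_bigr => -[c d] _ /=.
by rewrite !big_ord_recl big_ord0 /vkind2 !ffunE /= !mxE; ring.
Qed.

Lemma unit_normal_unique (G : 'M[R]_n.+1) (w nu : pt) :
  (forall s : pt, s ord0 t = 0 -> s != 0 -> 0 < mxform G s s) ->
  0 < w ord0 t -> 0 < nu ord0 t -> mxform G w w = -1 -> mxform G nu nu = -1 ->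
  (forall s : pt, s ord0 t = 0 -> mxform G w s = 0) ->
  (forall s : pt, s ord0 t = 0 -> mxform G nu s = 0) ->
  w = nu.
Proof.
move=> G_pos w_t nu_t w_unit nu_unit w_perp nu_perp.
pose mu := w ord0 t / nu ord0 t.
have nu_t0 : nu ord0 t != 0 by rewrite gt_eqF.
have w_mu : w = mu *: nu.
  apply/eqP; rewrite -subr_eq0; apply: contraT => s_neq0.
  have s_t : (w - mu *: nu) ord0 t = 0 by rewrite !mxE divfK // subrr.
  have := G_pos _ s_t s_neq0.
  by rewrite {1}mxformBl w_perp // nu_perp // mulr0 subrr ltxx.
have mu1 : mu = 1.
  have mu_gt0 : 0 < mu by rewrite divr_gt0.
  have : mu * mu * -1 = -1 by rewrite -{1}nu_unit -mxformZ -w_mu.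
  rewrite mulrN1 => /eqP; rewrite eqr_opp -expr2 sqrf_eq1 => /orP[/eqP //|/eqP mu_N1].
  by move: mu_gt0; rewrite mu_N1 ltr0N1.
by rewrite w_mu mu1 scale1r.
Qed.

Lemma shift_pushforward (Psi : pt -> pt) (g : tfield R n 'I_2) p (xh x : pt) :
  jac Psi p \in unitmx -> (forall a, jac Psi p t a = (a == t)%:R) ->
  (forall v : pt, v ord0 t = 0 -> v != 0 -> 0 < gform g (Psi p) v v) ->
  is_shift g (Psi p) x -> is_shift (pullback vkind2 Psi g) p xh ->
  xh *m (jac Psi p)^T = x + ebasis R t *m (jac Psi p)^T - ebasis R t.
Proof.
set J := jac Psi p => J_unit J_time G_pos.
move=> [x_t [N [nu [nu_t [nu_unit [nu_perp shift]]]]]].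
move=> [xh_t [Nh [nuh [nuh_t [nuh_unit [nuh_perp shift_h]]]]]].
have formE u v : gform (pullback vkind2 Psi g) p u v
                 = mxform (gmat g (Psi p)) (u *m J^T) (v *m J^T).
  by rewrite /gform gmat_pullback -mxform_mul.
have push_t (u : pt) : (u *m J^T) ord0 t = u ord0 t.
  by rewrite mul_trmxE; under eq_bigr do rewrite J_time; rewrite sum_delta_l.
have push_nuh : nuh *m J^T = nu.
  apply: unit_normal_unique nu_unit _ nu_perp; rewrite ?push_t -?formE //.
  move=> s s_t; have -> : s = s *m (invmx J)^T *m J^T.
    by rewrite -mulmxA -trmx_mul mulmxV // trmx1 mulmx1.
  rewrite -formE nuh_perp // mul_trmxE.
  by under eq_bigr do rewrite (invmx_time J_unit J_time); rewrite sum_delta_r.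
have push_shift := congr1 (fun u => u *m J^T) shift_h.
rewrite /= mulmxDl -scalemxAl push_nuh in push_shift.
have Nh_t : Nh * nu ord0 t = 1.
  move: (congr1 (fun u : pt => u ord0 t) push_shift).
  by rewrite [in RHS]mxE !push_t xh_t addr0 !mxE !eqxx => <-.
have N_t : N * nu ord0 t = 1.
  move: (congr1 (fun u : pt => u ord0 t) shift).
  by rewrite [in RHS]mxE x_t addr0 !mxE !eqxx => <-.
have Nh_N : Nh = N by apply: (mulIf (lt0r_neq0 nu_t)); rewrite Nh_t N_t.
rewrite push_shift shift Nh_N; apply/rowP => b; rewrite !mxE; ring.
Qed.

End ShiftPushforward.

Section Slice.
Variables (R : realType) (n : nat).
Local Notation t := (tidx n).
Local Notation pt := 'rV[R]_n.+1.

Definition spatial (S : finType) (A : tfield R n S) : Prop :=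
  forall (p : pt) (f : {ffun S -> 'I_n.+1}) j, f j = t -> A p f = 0.

Lemma decomp_spatial (S : finType) (kind : S -> bool) (T : tfield R n S)
  (X : pt -> pt) (c : {ffun S -> bool}) : spatial (decomp kind T X c).
Proof.
move=> q h j hj; rewrite /decomp big1 // => g _.
rewrite (bigD1 (val j)) //= /dweight valK /= hj eqxx.
by case: (kind _); rewrite !mul0r mulr0.
Qed.

Lemma tcoord_spatial_line (q : pt) h a :
  a != t -> tcoord (q + h *: ebasis R a) = tcoord q.
Proof. by move=> a_sp; rewrite /tcoord !mxE eqxx eq_sym (negbTE a_sp) mulr0 addr0. Qed.

Variables (U : set pt) (t0 : R).
Hypothesis oU : open U.

Lemma lie_eq_on_slice (S : finType) (kind : S -> bool) (Y : pt -> pt)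
  (A B : tfield R n S) p f :
  (forall q, U q -> tcoord q = t0 -> forall h, A q h = B q h) ->
  U p -> tcoord p = t0 -> Y p ord0 t = 0 -> lie kind Y A p f = lie kind Y B p f.
Proof.
move=> AB Up p_t Y_t; rewrite /lie; congr (_ + _).
  apply: eq_bigr => a _; have [->|a_sp] := eqVneq a t; first by rewrite Y_t !mul0r.
  congr (_ * _); apply: derive_eq_on_line.
  apply: filterS (near0_on_line (ebasis R a) oU Up) => h Uh.
  by rewrite AB // tcoord_spatial_line.
by apply: eq_bigr => i _; apply: eq_bigr => a _; rewrite AB.
Qed.

Variable Psi : pt -> pt.
Hypothesis Psi_id : forall p, U p -> tcoord p = t0 -> Psi p = p.

Lemma jac_slice q : U q -> tcoord q = t0 ->
  forall b a, a != t -> jac Psi q b a = (b == a)%:R.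
Proof.
move=> Uq q_t b a a_sp; rewrite /jac mxE /pd.
rewrite (@derive_eq_on_line _ _ _ _ (fun N : pt => N ord0 b)) ?derive_coord ?ebasisE //.
apply: filterS (near0_on_line (ebasis R a) oU Uq) => h Uh.
by rewrite Psi_id // tcoord_spatial_line.
Qed.

Lemma transfer_slice q v b a : U q -> tcoord q = t0 -> jac Psi q \in unitmx ->
  b != t -> a != t -> transfer (jac Psi q) v b a = (b == a)%:R.
Proof.
move=> Uq q_t J_unit b_sp a_sp; case: v; first exact: jac_slice.
rewrite /= eq_sym -(sum_invmx_mul J_unit).
by under eq_bigr do rewrite (jac_slice Uq q_t _ b_sp) mulrC; rewrite sum_delta_l.
Qed.

Lemma jstar_pullback_slice (S : finType) (kind : S -> bool) (A : tfield R n S) p f :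
  spatial A -> U p -> tcoord p = t0 -> jac Psi p \in unitmx ->
  jstar (pullback kind Psi A) p f = A p f.
Proof.
move=> A_sp Up p_t J_unit; rewrite /jstar /pullback Psi_id //.
have [f_sp|] := boolP [forall j, f j != t]; last first.
  move=> /forallPn[j /negPn/eqP f_t].
  by rewrite (A_sp _ _ _ f_t) (bigD1 j) //= f_t eqxx mul0r mulr0.
rewrite [X in _ * X]big1 ?mulr1 => [|j _]; last by rewrite (forallP f_sp j).
rewrite (bigD1 f) //= big1 ?mulr1 => [|j _]; last first.
  by rewrite -/(transfer _ _ _ _) transfer_slice ?eqxx ?(forallP f_sp j).
rewrite big1 ?addr0 // => h h_neq_f.
have [j h_j] : exists j, h j != f j.
  apply/existsP; apply: contraNT h_neq_f => /existsPn h_f.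
  by apply/eqP/ffunP => j; apply/eqP/negPn.
have [h_t|h_sp] := eqVneq (h j) t; first by rewrite (A_sp _ _ _ h_t) mul0r.
rewrite (bigD1 j) //= -/(transfer _ _ _ _) transfer_slice ?(forallP f_sp j) //.
by rewrite (negbTE h_j) mul0r mulr0.
Qed.

End Slice.

Theorem lemma5p1 (R : realType) (n : nat) (Sigma : set 'rV[R]_n) (a b : \bar R)
  (U V : set 'rV[R]_n.+1) (Psi : 'rV[R]_n.+1 -> 'rV[R]_n.+1)
  (g : tfield R n 'I_2) (X Xhat : 'rV[R]_n.+1 -> 'rV[R]_n.+1)
  (k : nat) (kind : 'I_k -> bool) (T : tfield R n 'I_k) :
  open Sigma -> (a < b)%E ->
  open U -> open V -> U `<=` Mset Sigma a b -> V `<=` Mset Sigma a b ->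
  diffeo U V Psi -> (forall p, U p -> tcoord (Psi p) = tcoord p) ->
  slice_compatible V g ->
  (forall p, V p -> is_shift g p (X p)) ->
  (forall p, U p -> is_shift (pullback vkind2 Psi g) p (Xhat p)) ->
  tsmooth V T ->
  (forall c p f, U p ->
     decomp kind (pullback kind Psi T) Xhat c p f
     = jstar (pullback (subkind kind c) Psi (decomp kind T X c)) p f) /\
  (forall t0 : R, (forall p, U p -> tcoord p = t0 -> Psi p = p) ->
     forall p, U p -> tcoord p = t0 ->
       (forall c f, decomp kind (pullback kind Psi T) Xhat c p f
                    = decomp kind T X c p f) /\
       (forall S : 'rV[R]_n.+1 -> 'rV[R]_n.+1,
          vsmooth U S -> (forall q, U q -> S q ord0 (tidx n) = 0) ->
          forall c f,
            lie (subkind kind c) S (decomp kind (pullback kind Psi T) Xhat c) p f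
            = lie (subkind kind c) S (decomp kind T X c) p f)).
Proof.
move=> _ _ oU _ _ _ [PsiUV [Psi_smooth [Phi [_ [Phi_smooth [PhiK _]]]]]] Psi_t
  [_ g_spatial_pos] shiftX shiftXh _.
have J_unit := jac_unit oU PsiUV Psi_smooth Phi_smooth PhiK.
have decomp_pull c p f : U p ->
    decomp kind (pullback kind Psi T) Xhat c p f
    = jstar (pullback (subkind kind c) Psi (decomp kind T X c)) p f.
  move=> Up; have J_time := jac_time_row oU Psi_t Up.
  have [x_t _] := shiftX _ (PsiUV _ Up).
  apply: (decomp_pullback_at kind T f (J_unit _ Up) J_time x_t).
  apply: (shift_pushforward (J_unit _ Up) J_time) (shiftX _ (PsiUV _ Up)) (shiftXh _ Up).
  exact: (g_spatial_pos _ (PsiUV _ Up)).2.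
split=> // t0 Psi_id.
have decomp_slice q c f : U q -> tcoord q = t0 ->
    decomp kind (pullback kind Psi T) Xhat c q f = decomp kind T X c q f.
  move=> Uq q_t; rewrite decomp_pull // (jstar_pullback_slice oU Psi_id) //.
  - exact: decomp_spatial.
  - exact: J_unit.
move=> p Up p_t; split=> [c f|S _ S_t c f]; first exact: decomp_slice.
apply: (lie_eq_on_slice (t0 := t0) oU) => // [q Uq q_t h|]; first exact: decomp_slice.
exact: S_t.
Qed.
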